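(* For any simple undirected graph $G$, with $$\Lambda_1=\sum_{\{st,uv\}\in Q}\big(a_{su}(k_t+k_v)+a_{sv}(k_t+k_u)+a_{tu}(k_s+k_v)+a_{tv}(k_s+k_u)\big),\qquad \Lambda_2=\sum_{\{st,uv\}\in Q}(a_{su}+a_{sv}+a_{tu}+a_{tv})(k_s+k_t+k_u+k_v),$$ one has $$\Lambda_2=\Lambda_1+\sum_{st\in E}(k_s+k_t)\big((k_s-1)(k_t-1)-|c(s,t)|\big).$$
   Context: $a_{ij}$ adjacency entries, $k_x$ degree, $\Gamma(x)$ neighbourhood, $c(s,t)=\Gamma(s)\cap\Gamma(t)$. $Q$ is the set of unordered pairs $\{st,uv\}$ of edges with $s,t,u,v$ pairwise distinct. *)

From mathcomp Require Import all_boot all_order all_algebra.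
Set Implicit Arguments. Unset Strict Implicit. Unset Printing Implicit Defensive.
Import GRing.Theory Num.Theory.

(* A simple undirected graph on a finite vertex type T
   is a relation [adj : rel T] that is symmetric and irreflexive. *)

Section Graph.
Variables (T : finType) (adj : rel T).

Definition aij (x y : T) : int := (adj x y : nat)%:Z.

Definition nbhd (x : T) : {set T} := [set y | adj x y].
Definition deg (x : T) : int := #|nbhd x|%:Z.

Definition cn (s t : T) : {set T} := nbhd s :&: nbhd t.

Definition edges : {set {set T}} :=
  [set e | [exists s, exists t, adj s t && (e == [set s; t])]].

Definition Qset : {set {set {set T}}} :=
  [set p | [exists e, exists f,
     [&& e \in edges, f \in edges, [disjoint e & f] & p == [set e; f]]]].

Definition fst2 {U : finType} (A : {set U}) (d : U) : U := odflt d [pick x in A].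
Definition snd2 {U : finType} (A : {set U}) (d : U) : U :=
  odflt d [pick x in A :\ fst2 A d].

Definition lam1_term (s t u v : T) : int :=
  aij s u * (deg t + deg v) + aij s v * (deg t + deg u)
  + aij t u * (deg s + deg v) + aij t v * (deg s + deg u).

Definition lam2_term (s t u v : T) : int :=
  (aij s u + aij s v + aij t u + aij t v) * (deg s + deg t + deg u + deg v).

(* apply a term to a pair {st, uv} \in Q via a chosen labelling;
   d is a default vertex (irrelevant on Q) *)
Definition on_pair (F : T -> T -> T -> T -> int) (d : T) (p : {set {set T}}) : int :=
  let e := fst2 p set0 in let f := snd2 p set0 in
  F (fst2 e d) (snd2 e d) (fst2 f d) (snd2 f d).

Definition Lambda1 (d : T) : int := \sum_(p in Qset) on_pair lam1_term d p.
Definition Lambda2 (d : T) : int := \sum_(p in Qset) on_pair lam2_term d p.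

Definition edge_term (s t : T) : int :=
  (deg s + deg t) * ((deg s - 1) * (deg t - 1) - #|cn s t|%:Z).

Definition edge_sum (d : T) : int :=
  \sum_(e in edges) edge_term (fst2 e d) (snd2 e d).

End Graph.

(* Each {st, uv} in Q is hit by exactly 8 ordered quadruples (s, t, u, v) with
   s ~ t, u ~ v and s, t, u, v pairwise distinct, and the summand of
   Lambda2 - Lambda1, which is the sum of a_xy (k_x + k_y) over the four cross
   pairs xy = su, sv, tu, tv, does not depend on the labelling.  Summed over
   quadruples, the four cross pairs contribute equally, so
   8 (Lambda2 - Lambda1) = 4 * sum over ordered edges su of (k_s + k_u) N(s, u),
   where N(s, u) = (k_s - 1)(k_u - 1) - |c(s, u)| counts the t in Gamma(s) - u
   and v in Gamma(u) - s with t <> v.  Ordered edges count each edge twice. *)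

From mathcomp Require Import all_boot all_order all_algebra.
From mathcomp Require Import ring.
Import GRing.Theory Num.Theory.
Local Open Scope ring_scope.
Set Implicit Arguments.
Unset Strict Implicit.
Unset Printing Implicit Defensive.

Section UnorderedPairs.
Variable U : finType.
Implicit Types (r : rel U) (s t x y d : U).

Definition pairsets r : {set {set U}} :=
  [set e | [exists x, exists y, r x y && (e == [set x; y])]].

Lemma mem_pairsets r e :
  (e \in pairsets r) = [exists x, exists y, r x y && (e == [set x; y])].
Proof. by rewrite /pairsets inE. Qed.

Lemma fst2_in (A : {set U}) d : A != set0 -> fst2 A d \in A.
Proof. by case/set0Pn=> x xA; rewrite /fst2; case: pickP => [//|/(_ x)]; rewrite xA. Qed.

Lemma snd2_in (A : {set U}) d : A :\ fst2 A d != set0 -> snd2 A d \in A :\ fst2 A d.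
Proof. by case/set0Pn=> x xA; rewrite /snd2; case: pickP => [//|/(_ x)]; rewrite xA. Qed.

Lemma mem_set2_neq x y s t : x \in [set s; t] -> y \in [set s; t] -> x != y ->
  (x, y) = (s, t) \/ (x, y) = (t, s).
Proof. by rewrite !inE => /orP[]/eqP-> /orP[]/eqP->; rewrite ?eqxx //; [left|right]. Qed.

Lemma fst2_snd2_set2 s t d : s != t ->
  (fst2 [set s; t] d, snd2 [set s; t] d) = (s, t) \/
  (fst2 [set s; t] d, snd2 [set s; t] d) = (t, s).
Proof.
move=> st; set A := [set s; t].
have fA : fst2 A d \in A by apply: fst2_in; rewrite -card_gt0 cards2.
have /setD1P[sf sA] : snd2 A d \in A :\ fst2 A d.
  apply: snd2_in.
  by rewrite -card_gt0 -(ltn_add2l (fst2 A d \in A)) -cardsD1 fA cards2 st.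
by apply: mem_set2_neq; rewrite // eq_sym.
Qed.

Lemma eq_set2 x y s t : x != y ->
  ([set x; y] == [set s; t]) = ((x, y) == (s, t)) || ((x, y) == (t, s)).
Proof.
move=> xy; apply/eqP/idP => [E | /orP[] /eqP[-> ->] //]; last exact: setUC.
have xE : x \in [set s; t] by rewrite -E !inE eqxx.
have yE : y \in [set s; t] by rewrite -E !inE eqxx orbT.
by case: (mem_set2_neq xE yE xy) => ->; rewrite eqxx ?orbT.
Qed.

Lemma fst2_snd2_sym (R : Type) (g : U -> U -> R) s t d :
    (forall x y, g x y = g y x) -> s != t ->
  g (fst2 [set s; t] d) (snd2 [set s; t] d) = g s t.
Proof. by move=> g_sym /(fst2_snd2_set2 d) [] [-> ->]. Qed.

Lemma sum_pairsets (R : nmodType) r (h : {set U} -> R) :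
    symmetric r -> irreflexive r ->
  \sum_x \sum_y (if r x y then h [set x; y] else 0) = (\sum_(e in pairsets r) h e) *+ 2.
Proof.
move=> r_sym r_irr; rewrite pair_big /= -big_mkcond /=.
rewrite (partition_big (fun p => [set p.1; p.2]) (fun e => e \in pairsets r)) => [|[x y] rxy];
  last first.
  by rewrite mem_pairsets; apply/existsP; exists x; apply/existsP; exists y; rewrite rxy eqxx.
rewrite -sumrMnl; apply: eq_bigr => e /[!mem_pairsets].
move=> /existsP[s /existsP[t /andP[rst /eqP->]]].
have st : s != t by apply: contraTneq rst => ->; rewrite r_irr.
rewrite (eq_bigl (mem [set (s, t); (t, s)])) => [|[x y] /=]; last first.
  rewrite !inE; case rxy: (r x y) => /=.
    by rewrite eq_set2 //; apply: contraTneq rxy => ->; rewrite r_irr.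
  by apply/esym/norP; split; apply: contraFneq rxy => -[-> ->] //; rewrite r_sym.
rewrite (eq_bigr (fun=> h [set s; t])) => [|_ /[!inE] /orP[] /eqP-> //]; last by rewrite setUC.
by rewrite sumr_const cards2 xpair_eqE (negbTE st).
Qed.

Lemma sum_pairsets_labelled (R : nmodType) r (g : U -> U -> R) d :
    symmetric r -> irreflexive r -> (forall x y, g x y = g y x) ->
  \sum_x \sum_y (if r x y then g x y else 0) =
  (\sum_(e in pairsets r) g (fst2 e d) (snd2 e d)) *+ 2.
Proof.
move=> r_sym r_irr g_sym; rewrite -sum_pairsets //.
apply: eq_bigr => x _; apply: eq_bigr => y _; case: ifP => // rxy.
by rewrite fst2_snd2_sym //; apply: contraTneq rxy => ->; rewrite r_irr.
Qed.

Lemma disjoint_set2 s t x y :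
  [disjoint [set s; t] & [set x; y]] = [&& s != x, s != y, t != x & t != y].
Proof. by rewrite disjoints_subset subUset !sub1set !inE !negb_or !andbA. Qed.

Lemma sum_card_setD1 (A B : {set U}) :
  (\sum_(x in A) #|B :\ x| + #|A :&: B| = #|A| * #|B|)%N.
Proof.
rewrite -sum_nat_const; under [RHS]eq_bigr => x _ do rewrite (cardsD1 x B).
rewrite big_split /= addnC; congr (_ + _).
by rewrite -big_mkcondr -sum1_card; apply: eq_bigl => x; rewrite inE.
Qed.

Lemma sum_offdiag (R : zmodType) (A B : {set U}) (c : R) :
  \sum_x \sum_y (if [&& x \in A, y \in B & x != y] then c else 0) =
  c *+ (#|A| * #|B|)%N - c *+ #|A :&: B|.
Proof.
rewrite -sum_card_setD1 mulrnDr addrK -sumrMnr [RHS]big_mkcond; apply: eq_bigr => x _.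
case: (x \in A); last by rewrite big1.
rewrite -sumr_const [RHS]big_mkcond; apply: eq_bigr => y _.
by rewrite /= eq_sym andbC !inE.
Qed.

End UnorderedPairs.

Section Graph.
Variables (T : finType) (adj : rel T).
Hypotheses (adj_sym : symmetric adj) (adj_irr : irreflexive adj).
Implicit Types (s t u v x y d : T) (e f : {set T}).

Lemma adj_neq x y : adj x y -> x != y.
Proof. by apply: contraTneq => ->; rewrite adj_irr. Qed.

Lemma edgesE : edges adj = pairsets adj.
Proof. by []. Qed.

Definition disjoint_edges e f := [&& e \in edges adj, f \in edges adj & [disjoint e & f]].

Lemma QsetE : Qset adj = pairsets disjoint_edges.
Proof.
apply/setP => p; rewrite mem_pairsets inE.
by do 2 apply: eq_existsb => ?; rewrite /disjoint_edges !andbA.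
Qed.

Lemma disjoint_edges_sym : symmetric disjoint_edges.
Proof. by move=> e f; rewrite /disjoint_edges andbCA andbA disjoint_sym -andbA andbCA. Qed.

Lemma disjoint_edges_irr : irreflexive disjoint_edges.
Proof.
move=> e; apply/negbTE/and3P => -[+ _]; rewrite mem_pairsets.
move=> /existsP[x /existsP[y /andP[_ /eqP->]]].
by rewrite -setI_eq0 setIid -cards_eq0 cards2.
Qed.

Definition disjoint_arcs s t u v :=
  adj s t && adj u v && [&& s != u, s != v, t != u & t != v].

Definition sum_disjoint_arcs (F : T -> T -> T -> T -> int) : int :=
  \sum_s \sum_t \sum_u \sum_v (if disjoint_arcs s t u v then F s t u v else 0).

Lemma sum_Qset_on_pair (F : T -> T -> T -> T -> int) d :
    (forall s t u v, F s t u v = F t s u v) ->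
    (forall s t u v, F s t u v = F s t v u) ->
    (forall s t u v, F s t u v = F u v s t) ->
  (\sum_(p in Qset adj) on_pair F d p) *+ 8 = sum_disjoint_arcs F.
Proof.
move=> F12 F34 F_pairs.
pose G e f := F (fst2 e d) (snd2 e d) (fst2 f d) (snd2 f d).
have G_sym e f : G e f = G f e by rewrite /G F_pairs.
have G_set2 s t u v : s != t -> u != v -> G [set s; t] [set u; v] = F s t u v.
  move=> st uv; rewrite /G (fst2_snd2_sym (g := fun x y => F x y _ _)) //.
  by rewrite (fst2_snd2_sym (g := F s t)).
have -> : (\sum_(p in Qset adj) on_pair F d p) *+ 8 =
    (\sum_(e in edges adj) \sum_(f in edges adj)
       (if [disjoint e & f] then G e f else 0)) *+ 4.
  rewrite QsetE -[8%N]/(2 * 4)%N mulrnA.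
  rewrite -(sum_pairsets_labelled set0 disjoint_edges_sym disjoint_edges_irr G_sym).
  congr (_ *+ 4); rewrite [RHS]big_mkcond; apply: eq_bigr => e _.
  rewrite /disjoint_edges; case: (e \in edges adj); last by rewrite big1.
  by rewrite [RHS]big_mkcond; apply: eq_bigr => f _; case: (f \in edges adj).
rewrite -[4%N]/(2 * 2)%N mulrnA -sumrMnl edgesE -sum_pairsets //.
apply: eq_bigr => s _; apply: eq_bigr => t _; rewrite /disjoint_arcs.
case: ifP => [st|_]; last by rewrite big1 // => u _; rewrite big1.
rewrite -edgesE -sum_pairsets //; apply: eq_bigr => u _; apply: eq_bigr => v _.
case: ifP => [uv|_] //=.
by rewrite disjoint_set2 (G_set2 _ _ _ _ (adj_neq st) (adj_neq uv)).
Qed.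

Lemma disjoint_arcsC12 s t u v : disjoint_arcs s t u v = disjoint_arcs t s u v.
Proof.
rewrite /disjoint_arcs (adj_sym s).
by case: (s != u); case: (s != v); case: (t != u); case: (t != v); rewrite /= ?andbF.
Qed.

Lemma disjoint_arcsC34 s t u v : disjoint_arcs s t u v = disjoint_arcs s t v u.
Proof.
rewrite /disjoint_arcs (adj_sym u).
by case: (s != u); case: (s != v); case: (t != u); case: (t != v); rewrite /= ?andbF.
Qed.

Lemma sum_disjoint_arcsD F G :
  sum_disjoint_arcs (fun s t u v => F s t u v + G s t u v) =
  sum_disjoint_arcs F + sum_disjoint_arcs G.
Proof.
rewrite -big_split; apply: eq_bigr => s _; rewrite -big_split; apply: eq_bigr => t _.
rewrite -big_split; apply: eq_bigr => u _; rewrite -big_split; apply: eq_bigr => v _.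
by case: ifP; rewrite ?addr0.
Qed.

Lemma sum_disjoint_arcsC12 F :
  sum_disjoint_arcs F = sum_disjoint_arcs (fun s t u v => F t s u v).
Proof.
rewrite /sum_disjoint_arcs exchange_big; do 4 (apply: eq_bigr => ? _).
by rewrite disjoint_arcsC12.
Qed.

Lemma sum_disjoint_arcsC34 F :
  sum_disjoint_arcs F = sum_disjoint_arcs (fun s t u v => F s t v u).
Proof.
rewrite /sum_disjoint_arcs; do 2 (apply: eq_bigr => ? _).
rewrite exchange_big; do 2 (apply: eq_bigr => ? _).
by rewrite disjoint_arcsC34.
Qed.

Lemma aijC x y : aij adj x y = aij adj y x.
Proof. by rewrite /aij adj_sym. Qed.

Definition adj_degsum x y := aij adj x y * (deg adj x + deg adj y).

Lemma adj_degsumC x y : adj_degsum x y = adj_degsum y x.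
Proof. by rewrite /adj_degsum aijC addrC. Qed.

Definition cross_term s t u v :=
  adj_degsum s u + adj_degsum s v + adj_degsum t u + adj_degsum t v.

Lemma Lambda2_sub_Lambda1 d :
  Lambda2 adj d - Lambda1 adj d = \sum_(p in Qset adj) on_pair cross_term d p.
Proof.
rewrite -sumrB; apply: eq_bigr => p _.
by rewrite /on_pair /lam2_term /lam1_term /cross_term /adj_degsum; ring.
Qed.

Lemma sum_Qset_cross_term d :
  (\sum_(p in Qset adj) on_pair cross_term d p) *+ 8 = sum_disjoint_arcs cross_term.
Proof.
apply: sum_Qset_on_pair => s t u v;
by rewrite /cross_term ?(adj_degsumC u) ?(adj_degsumC v); ring.
Qed.

Lemma sum_disjoint_arcs_cross_term :
  sum_disjoint_arcs cross_term =
  (sum_disjoint_arcs (fun s _ u _ => adj_degsum s u)) *+ 4.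
Proof.
rewrite !sum_disjoint_arcsD.
rewrite [X in _ + X]sum_disjoint_arcsC12 [X in _ + X]sum_disjoint_arcsC34.
rewrite [X in _ + X + _]sum_disjoint_arcsC12 [X in _ + X + _ + _]sum_disjoint_arcsC34 /=.
by ring.
Qed.

Lemma in_nbhd x y : (y \in nbhd adj x) = adj x y.
Proof. by rewrite inE. Qed.

Lemma card_nbhdD1 s u : adj s u -> #|nbhd adj s :\ u|%:Z = deg adj s - 1.
Proof.
by move=> su; rewrite /deg (cardsD1 u (nbhd adj s)) in_nbhd su add1n -addn1 PoszD addrK.
Qed.

Lemma nbhdD1_setI s u :
  adj s u -> (nbhd adj s :\ u) :&: (nbhd adj u :\ s) = cn adj s u.
Proof.
move=> su; apply/setP => x; rewrite !(inE, in_nbhd).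
case sx: (adj s x); case ux: (adj u x); rewrite ?andbF //=.
by rewrite !(eq_sym x) !adj_neq.
Qed.

Lemma sum_disjoint_arcs_adj_degsum :
  sum_disjoint_arcs (fun s _ u _ => adj_degsum s u) =
  \sum_s \sum_u (if adj s u then edge_term adj s u else 0).
Proof.
apply: eq_bigr => s _; rewrite exchange_big; apply: eq_bigr => u _.
case su: (adj s u); last first.
  rewrite big1 // => t _; rewrite big1 // => v _.
  by rewrite /adj_degsum /aij su mul0r if_same.
rewrite (eq_bigr (fun t => \sum_v
    (if [&& t \in nbhd adj s :\ u, v \in nbhd adj u :\ s & t != v]
     then adj_degsum s u else 0))) => [|t _]; last first.
  apply: eq_bigr => v _.
  rewrite /disjoint_arcs !(inE, in_nbhd) (adj_neq su) (eq_sym v s) /=.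
  by case: (adj s t); case: (adj u v); case: (t != u); case: (s != v); case: (t != v).
rewrite sum_offdiag nbhdD1_setI // !pmulrn !mulrzz PoszM.
rewrite card_nbhdD1 // card_nbhdD1 1?adj_sym //.
by rewrite /adj_degsum /edge_term /aij su mul1r; ring.
Qed.

Lemma sum_edge_term d :
  \sum_s \sum_u (if adj s u then edge_term adj s u else 0) = edge_sum adj d *+ 2.
Proof.
rewrite (sum_pairsets_labelled d adj_sym adj_irr) // => x y.
by rewrite /edge_term /cn setIC; ring.
Qed.

End Graph.

Unset Implicit Arguments.

Theorem proposition15 (T : finType) (adj : rel T)
    (adj_sym : symmetric adj) (adj_irr : irreflexive adj) (d : T) :
  Lambda2 adj d = Lambda1 adj d + edge_sum adj d.
Proof.
suff : (Lambda2 adj d - Lambda1 adj d) *+ 8 = edge_sum adj d *+ 8.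
  by move/(pmulrnI (isT : (0 < 8)%N)) <-; rewrite addrC subrK.
rewrite Lambda2_sub_Lambda1 sum_Qset_cross_term // sum_disjoint_arcs_cross_term //.
by rewrite sum_disjoint_arcs_adj_degsum // (sum_edge_term adj_sym adj_irr d) -mulrnA.
Qed.
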